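(* For $s\in\mu_r$, $u,v\in\mathcal{A}_1$, $w\in\mathcal{A}_r$: \[ (u\diamond_1v)\diamond_s w=u\diamond_s(v\diamond_s w). \]
   Context: Fix $r\ge1$, $\mu_r$ the $r$th roots of unity, $\mathcal{A}_r=\mathbb{Q}\langle x,y_s\mid s\in\mu_r\rangle$ the free noncommutative polynomial algebra over $\mathbb{Q}$, $\mathcal{A}_1=\mathbb{Q}\langle x,y\rangle$ with $y=y_1$. Write $z=x+y_1$, $z_s=x+y_s$, $\delta(1)=0$, $\delta(s)=1$ ($s\ne1$), $z_s^\delta=x+\delta(s)y_s$, $z_{k,s}=x^{k-1}y_s$. Let $\varphi$ be the algebra automorphism of $\mathcal{A}_r$ with $\varphi(x)=z$, $\varphi(y_s)=\delta(s)y_s-y_1$. Every word is uniquely $z_{k_1,s_1}\cdots z_{k_l,s_l}x^a$ ($l,a\ge0$); define linear maps $\mathcal{I}(z_{k_1,s_1}\cdots z_{k_l,s_l}x^a)=z_{k_1,s_1}z_{k_2,s_1s_2}\cdots z_{k_l,s_1\cdots s_l}x^a$ and $M_s(z_{k_1,s_1}\cdots z_{k_l,s_l}x^a)=z_{k_1,ss_1}z_{k_2,s_2}\cdots z_{k_l,s_l}x^a$ (with $M_s(x^a)=x^a$), and $\psi_s=\varphi\circ\mathcal{I}\circ M_s$. Diamond product: for $s\in\mu_r$, $\diamond_s:\mathcal{A}_1\times\mathcal{A}_r\to\mathcal{A}_r$ is the $\mathbb{Q}$-bilinear map defined recursively on words by $1\diamond_s w=w$, $v\diamond_s1=\psi_s\varphi(v)$,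 and for $v\in\mathcal{A}_1$, $w\in\mathcal{A}_r$, $1\ne t\in\mu_r$: $vx\diamond_s wx=(v\diamond_s wx)x-(vy\diamond_s w)x$; $vy\diamond_s wx=(v\diamond_s wx)y+(vy\diamond_s w)x$; $vx\diamond_s wy=(v\diamond_s wy)x+(vx\diamond_s w)y$; $vy\diamond_s wy=(v\diamond_s wy)y-(vx\diamond_s w)y$; $vx\diamond_s wy_t=(v\diamond_s wy_t)x+(v\diamond_s wz_t)y_t-(vy\diamond_s w)y_t$; $vy\diamond_s wy_t=(v\diamond_s wy_t)y-(v\diamond_s wz_t)y_t+(vy\diamond_s w)y_t$. (For $s=1$ and $v,w\in\mathcal{A}_1$, $v\diamond_1w\in\mathcal{A}_1$.) *)

From HB Require Import structures.
From mathcomp Require Import all_boot all_order all_algebra all_field.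
From mathcomp Require Import finmap monalg.
Set Implicit Arguments. Unset Strict Implicit. Unset Printing Implicit Defensive.
Import Order.TTheory GRing.Theory Num.Theory.
Local Open Scope ring_scope.

(* Letters: [None] is x, [Some s] is y_s (s a complex algebraic number;
   membership in mu_r is imposed by the predicate [inA] below). *)
Definition letter := option algC.
Definition word := seq letter.

(* The free noncommutative polynomial algebra Q<x, y_s>; its product is
   concatenation of words. *)
Definition A := {malg rat[{fmonom letter}]}.

Definition mon (w : word) : A := << FMonom w >>.
Definition X : A := mon [:: None].
Definition Yg (s : algC) : A := mon [:: Some s].

Definition mu (r : nat) (s : algC) : bool := s ^+ r == 1.

Definition inA (r : nat) (p : A) : Prop :=
  forall m : {fmonom letter}, m \in msupp p ->
    all (fun l : letter => if l is Some t then mu r t else true) (fmonom_val m).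

Definition lin (f : word -> A) (p : A) : A :=
  \sum_(m <- msupp p) p@_m *: f (fmonom_val m).

Definition delta (s : algC) : rat := if s == 1 then 0 else 1.

Definition phi_letter (l : letter) : A :=
  match l with
  | None => X + Yg 1
  | Some s => delta s *: Yg s - Yg 1
  end.
Definition phi_word (w : word) : A := \prod_(l <- w) phi_letter l.
Definition phi : A -> A := lin phi_word.

(* I : z_{k1,s1} ... z_{kl,sl} x^a |-> z_{k1,s1} z_{k2,s1 s2} ... x^a *)
Fixpoint Iw (acc : algC) (w : word) : word :=
  match w with
  | [::] => [::]
  | None :: w' => None :: Iw acc w'
  | Some t :: w' => Some (acc * t) :: Iw (acc * t) w'
  end.
Fixpoint Mw (s : algC) (w : word) : word :=
  match w with
  | [::] => [::]
  | None :: w' => None :: Mw s w'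
  | Some t :: w' => Some (s * t) :: w'
  end.

Definition Imap : A -> A := lin (fun w => mon (Iw 1 w)).
Definition Mmap (s : algC) : A -> A := lin (fun w => mon (Mw s w)).
Definition psi (s : algC) (p : A) : A := phi (Imap (Mmap s p)).

Definition splitlast (w : word) : option (word * letter) :=
  match rev w with
  | [::] => None
  | l :: r => Some (rev r, l)
  end.

(* diamond product on words, by recursion with fuel n = |v| + |w|
   (every recursive call has total length exactly n - 1).
   Left letters other than x, y = y_1 never occur for v in A_1 (value 0). *)
Fixpoint dia_aux (n : nat) (s : algC) (v w : word) : A :=
  match splitlast v, splitlast w with
  | None, _ => mon w
  | Some _, None => psi s (phi (mon v))
  | Some (v', a), Some (w', b) =>
    match n with
    | 0 => 0
    | n'.+1 =>
      let D := dia_aux n' s in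
      match a with
      | None =>
        match b with
        | None => D v' w * X - D (rcons v' (Some 1)) w' * X
        | Some t =>
          if t == 1 then D v' w * X + D v w' * Yg 1
          else D v' w * X + (D v' (rcons w' None) + D v' w) * Yg t
                 - D (rcons v' (Some 1)) w' * Yg t
        end
      | Some a' =>
        if a' == 1 then
          match b with
          | None => D v' w * Yg 1 + D v w' * X
          | Some t =>
            if t == 1 then D v' w * Yg 1 - D (rcons v' None) w' * Yg 1
            else D v' w * Yg 1 - (D v' (rcons w' None) + D v' w) * Yg t
                   + D v w' * Yg t
          end
        else 0
      end
    end
  end.

Definition dia_word (s : algC) (v w : word) : A :=
  dia_aux (size v + size w) s v w.

Definition dia (s : algC) (u w : A) : A :=
  lin (fun v => lin (fun w' => dia_word s v w') w) u.

From HB Require Import structures.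
From mathcomp Require Import all_boot all_order all_algebra all_field.
From mathcomp Require Import finmap monalg zify.
Set Implicit Arguments. Unset Strict Implicit. Unset Printing Implicit Defensive.
Import GRing.Theory.
Local Open Scope fset_scope.
Local Open Scope ring_scope.

(* The involution phi conjugates every diamond product into a stuffle
   (quasi-shuffle) product: for u in A_1, u <>_s w = phi (phi u *_s phi w),
   where in *_s two final letters y_c, y_t merge into y_t and the y-letters
   left over in the left factor are relabelled y_s.  This product never looks
   at the labels of its left factor, so (p *_r q) *_s t = p *_s (q *_s t) for
   all r and s, by induction on the total length of three words.  As A_1 is
   stable under phi and *_1, the product u <>_1 v lies in A_1, and both sides
   of the identity equal phi (phi u *_s (phi v *_s phi w)). *)

Lemma lin_fsubset (f : word -> A) (p : A) (d : {fset {fmonom letter}}) :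
  msupp p `<=` d -> lin f p = \sum_(m <- d) p@_m *: f (fmonom_val m).
Proof.
move=> le; rewrite /lin (big_fset_incl _ le) //= => m _ /mcoeff_outdom ->.
by rewrite scale0r.
Qed.

Lemma lin_is_linear (f : word -> A) : linear (lin f).
Proof.
move=> a p q; have le : msupp (a *: p + q) `<=` msupp p `|` msupp q.
  exact: fsubset_trans (msuppD_le _ _) (fsetUSS (msuppZ_le _ _) (fsubset_refl _)).
rewrite (lin_fsubset f le) (lin_fsubset f (fsubsetUl _ (msupp q))).
rewrite (lin_fsubset f (fsubsetUr (msupp p) _)) scaler_sumr -big_split /=.
by apply: eq_bigr => m _; rewrite mcoeffD mcoeffZ scalerDl scalerA.
Qed.

HB.instance Definition _ (f : word -> A) :=
  GRing.isLinear.Build rat A A *:%R (lin f) (lin_is_linear f).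

Lemma lin_mon (f : word -> A) (w : word) : lin f (mon w) = f w.
Proof. by rewrite (lin_fsubset f msuppU_le) big_seq_fset1 mcoeffUU scale1r. Qed.

Lemma lin_monE (p : A) : lin mon p = p.
Proof.
rewrite [RHS]monalgE; apply: eq_bigr => m _.
by rewrite /mon fmK malgZ_def /fgscale msuppU1 big_seq_fset1 mcoeffU1 eqxx mulr1.
Qed.

Lemma eq_lin (f g : word -> A) : f =1 g -> lin f =1 lin g.
Proof. by move=> fg p; apply: eq_bigr => m _; rewrite fg. Qed.

Lemma lin_funD (f g : word -> A) (p : A) : lin (fun w => f w + g w) p = lin f p + lin g p.
Proof. by rewrite /lin -big_split; apply: eq_bigr => m _; rewrite scalerDr. Qed.

Lemma lin_funN (f : word -> A) (p : A) : lin (fun w => - f w) p = - lin f p.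
Proof. by rewrite /lin -sumrN; apply: eq_bigr => m _; rewrite scalerN. Qed.

Lemma lin_funZ (k : rat) (f : word -> A) (p : A) : lin (fun w => k *: f w) p = k *: lin f p.
Proof. by rewrite /lin scaler_sumr; apply: eq_bigr => m _; rewrite !scalerA mulrC. Qed.

Lemma linear_lin (L : A -> A) (f : word -> A) (p : A) :
  linear L -> L (lin f p) = lin (L \o f) p.
Proof.
move=> linL; have L0 : L 0 = 0.
  by have := linL 1 0 0; rewrite !scale1r addr0 => /eqP; rewrite eq_sym -subr_eq0 addrK => /eqP.
rewrite /lin; elim: (enum_fset _) => [|m ms IH]; first by rewrite !big_nil.
by rewrite !big_cons linL IH.
Qed.

Lemma linear_monE (L : A -> A) (p : A) : linear L -> L p = lin (L \o mon) p.
Proof. by move=> linL; rewrite -{1}(lin_monE p) linear_lin. Qed.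

Lemma eq_linear_mon (L1 L2 : A -> A) :
  linear L1 -> linear L2 -> (forall w, L1 (mon w) = L2 (mon w)) -> L1 =1 L2.
Proof.
by move=> lin1 lin2 eqL p; rewrite (linear_monE p lin1) (linear_monE p lin2); apply: eq_lin.
Qed.

Lemma malg_scalerAr (k : rat) (p q : A) : k *: (p * q) = p * (k *: q).
Proof.
apply/malgP => m; rewrite mcoeffZ.
apply: eq_trans _ (esym (mcoeffMlw _ (fsubset_refl _) (msuppZ_le k q))).
rewrite mcoeffMl mulr_sumr; apply: eq_bigr => m1 _.
by rewrite mulr_sumr; apply: eq_bigr => m2 _; rewrite mcoeffZ mulrnAr mulrCA.
Qed.

Lemma lin_mulr (f : word -> A) (c p : A) : lin f p * c = lin (fun w => f w * c) p.
Proof. by rewrite (@linear_lin (fun x => x * c)) // => k x y; rewrite mulrDl scalerAl. Qed.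

Lemma lin_mull (f : word -> A) (c p : A) : c * lin f p = lin (fun w => c * f w) p.
Proof. by rewrite /lin mulr_sumr; apply: eq_bigr => m _; rewrite -malg_scalerAr. Qed.

Lemma monM (a b : word) : mon a * mon b = mon (a ++ b).
Proof.
rewrite /mon malgM_def fgmulUU mulr1; congr << _ *g _ >>.
by apply/val_inj; rewrite /= fmM.
Qed.

Lemma mon_nil : mon [::] = 1.
Proof.
rewrite /mon (_ : FMonom [::] = (mone : {fmonom letter})) ?mpolyC1E //.
by apply/val_inj; rewrite /= fm1.
Qed.

Lemma mon_prod (w : word) : mon w = \prod_(l <- w) mon [:: l].
Proof.
elim/last_ind: w => [|w l IH]; first by rewrite big_nil mon_nil.
by rewrite -cats1 -monM big_cat big_seq1 IH.
Qed.

(* [rmul], [wmon] and [stuffle] are locked: otherwise matching compares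
   distinct products of monomials by unfolding the multiplication of the
   monoid algebra, which is prohibitively slow. *)
Fact rmul_key : unit. Proof. exact: tt. Qed.
Definition rmul := locked_with rmul_key (fun (l : letter) (p : A) => p * mon [:: l]).

Lemma rmulE (l : letter) (p : A) : rmul l p = p * mon [:: l].
Proof. by rewrite /rmul locked_withE. Qed.

Lemma rmulD (l : letter) (p q : A) : rmul l (p + q) = rmul l p + rmul l q.
Proof. by rewrite !rmulE mulrDl. Qed.

Lemma rmulN (l : letter) (p : A) : rmul l (- p) = - rmul l p.
Proof. by rewrite !rmulE mulNr. Qed.

Lemma mon_rcons (w : word) (l : letter) : mon (rcons w l) = rmul l (mon w).
Proof. by rewrite rmulE monM cats1. Qed.

Lemma lin_rmul (f : word -> A) (l : letter) (p : A) :
  lin f (rmul l p) = lin (fun w => f (rcons w l)) p.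
Proof.
rewrite rmulE -{1}(lin_monE p) lin_mulr linear_lin; last exact: lin_is_linear.
by apply: eq_lin => w /=; rewrite monM lin_mon cats1.
Qed.

Lemma lin_rmulr (f : word -> A) (l : letter) (p : A) :
  rmul l (lin f p) = lin (fun w => rmul l (f w)) p.
Proof. by rewrite rmulE lin_mulr; apply: eq_lin => w; rewrite rmulE. Qed.

Fact wmon_key : unit. Proof. exact: tt. Qed.
Definition wmon := locked_with wmon_key mon.

Lemma wmonE (w : word) : wmon w = mon w.
Proof. by rewrite /wmon locked_withE. Qed.

Lemma wmon_nil : wmon [::] = 1.
Proof. by rewrite wmonE mon_nil. Qed.

Lemma wmon_rcons (w : word) (l : letter) : wmon (rcons w l) = rmul l (wmon w).
Proof. by rewrite !wmonE mon_rcons. Qed.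

Lemma phi_mon (w : word) : phi (mon w) = phi_word w.
Proof. exact: lin_mon. Qed.

HB.instance Definition _ := GRing.Linear.on phi.

Lemma phi_is_monoid_morphism : monoid_morphism phi.
Proof.
split=> [|p q]; first by rewrite -mon_nil phi_mon /phi_word big_nil mon_nil.
have phi_mulmon w : phi (p * mon w) = phi p * phi (mon w).
  rewrite -{1}(lin_monE p) lin_mulr linear_lin; last exact: linearP.
  rewrite phi_mon /phi lin_mulr; apply: eq_lin => a /=.
  by rewrite monM lin_mon /phi_word big_cat.
transitivity (lin (fun w => phi p * phi (mon w)) q).
  rewrite -{1}(lin_monE q) lin_mull linear_lin; last exact: linearP.
  by apply: eq_lin => w; exact: phi_mulmon.
by rewrite -lin_mull (eq_lin phi_mon).
Qed.

HB.instance Definition _ := GRing.isMonoidMorphism.Build A A phi phi_is_monoid_morphism.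

Lemma phi_letterE (l : letter) : phi (mon [:: l]) = phi_letter l.
Proof. by rewrite phi_mon /phi_word big_seq1. Qed.

Lemma delta1 : delta 1 = 0.
Proof. by rewrite /delta eqxx. Qed.

Lemma delta_neq1 (t : algC) : t != 1 -> delta t = 1.
Proof. by rewrite /delta => /negbTE ->. Qed.

Lemma phiX : phi X = X + Yg 1.
Proof. exact: phi_letterE. Qed.

Lemma phiY (t : algC) : phi (Yg t) = delta t *: Yg t - Yg 1.
Proof. exact: phi_letterE. Qed.

Lemma phiK : involutive phi.
Proof.
apply: (eq_linear_mon (L2 := id)) => [k p q|k p q|w] /=; rewrite ?linearP //.
rewrite mon_prod !rmorph_prod; apply: eq_bigr => l _ /=.
rewrite phi_letterE; case: l => [t|] /=; last first.
  by rewrite rmorphD /= phiX phiY delta1 scale0r sub0r addrK.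
rewrite linearB linearZ /= !phiY delta1 scale0r sub0r opprK.
by have [->|/delta_neq1->] := eqVneq t 1; rewrite ?delta1 ?scale0r ?add0r ?scale1r ?subrK.
Qed.

Lemma phi_rmulX (p : A) : phi (rmul None p) = rmul None (phi p) + rmul (Some 1) (phi p).
Proof. by rewrite !rmulE rmorphM /= phiX mulrDr. Qed.

Lemma phi_rmulY1 (p : A) : phi (rmul (Some 1) p) = - rmul (Some 1) (phi p).
Proof. by rewrite !rmulE rmorphM /= phiY delta1 scale0r sub0r mulrN. Qed.

Lemma phi_rmulY (t : algC) (p : A) : t != 1 ->
  phi (rmul (Some t) p) = rmul (Some t) (phi p) - rmul (Some 1) (phi p).
Proof. by move=> /delta_neq1 dt; rewrite !rmulE rmorphM /= phiY dt scale1r mulrBr. Qed.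

(** * The subalgebras A_r *)

Definition letter_mu (r : nat) (l : letter) : bool := if l is Some t then mu r t else true.

(* A boolean version of [inA r]. *)
Definition alg_mu (r : nat) : {pred A} :=
  [pred p | all (fun m : {fmonom letter} => all (letter_mu r) m) (msupp p)].

Lemma alg_muP (r : nat) (p : A) :
  reflect {in msupp p, forall m, all (letter_mu r) (fmonom_val m)} (p \in alg_mu r).
Proof. exact: allP. Qed.

Lemma alg_mu_fsubset (r : nat) (p : A) (d : {fset {fmonom letter}}) :
  msupp p `<=` d -> {in d, forall m, all (letter_mu r) (fmonom_val m)} -> p \in alg_mu r.
Proof. by move=> /fsubsetP pd dr; apply/alg_muP => m /pd/dr. Qed.

Lemma mon_alg_mu (r : nat) (w : word) : all (letter_mu r) w -> mon w \in alg_mu r.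
Proof. by move=> ok; apply: alg_mu_fsubset msuppU_le _ => m; rewrite inE => /eqP ->. Qed.

Lemma alg_mu_subalg_closed (r : nat) : subalg_closed (alg_mu r).
Proof.
split=> [|k p q pr qr|p q pr qr]; first by rewrite -mon_nil mon_alg_mu.
  have le := fsubset_trans (msuppD_le _ _) (fsetUSS (msuppZ_le k p) (fsubset_refl (msupp q))).
  apply: alg_mu_fsubset le _.
  by move=> m; rewrite inE => /orP[/(alg_muP _ _ pr)|/(alg_muP _ _ qr)].
apply/alg_muP => m /msuppM_le[m1 [m2 [m1p m2q ->]]].
by rewrite fmM all_cat (alg_muP _ _ pr) ?(alg_muP _ _ qr).
Qed.

HB.instance Definition _ (r : nat) :=
  GRing.isSubalgClosed.Build rat A (alg_mu r) (alg_mu_subalg_closed r).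

Lemma mu_r1 (r : nat) : mu r 1.
Proof. by rewrite /mu expr1n. Qed.

Lemma lin_alg_mu (r : nat) (f : word -> A) (p : A) :
  {in msupp p, forall m, f (fmonom_val m) \in alg_mu r} -> lin f p \in alg_mu r.
Proof. by move=> fr; rewrite /lin big_seq; apply: rpred_sum => m /fr; apply: rpredZ. Qed.

Lemma eq_lin_mu (r : nat) (f g : word -> A) (p : A) :
  p \in alg_mu r -> {in all (letter_mu r), f =1 g} -> lin f p = lin g p.
Proof.
move=> pr fg; apply: eq_big_seq => m mp.
by rewrite fg //; exact: (alg_muP _ _ pr).
Qed.

Lemma phi_alg_mu (r : nat) (p : A) : p \in alg_mu r -> phi p \in alg_mu r.
Proof.
move=> pr; apply: lin_alg_mu => m /(alg_muP _ _ pr); move: (fmonom_val m) => w ok.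
rewrite /phi_word big_seq; apply: rpred_prod => -[t|] /= lw.
  by rewrite rpredB ?rpredZ // mon_alg_mu //= ?mu_r1 // andbT; exact: (allP ok _ lw).
by rewrite rpredD // mon_alg_mu //= mu_r1.
Qed.

(** * The stuffle product *)

Definition relabel_word (s : algC) (w : word) : word := map (omap (fun=> s)) w.

Definition relabel (s : algC) : A -> A := lin (fun w => mon (relabel_word s w)).

HB.instance Definition _ (s : algC) := GRing.Linear.on (relabel s).

(* The stuffle of the reversed words [rev a] and [rev b], so that the
   recursion consumes last letters. *)
Fixpoint stuffle_rev (s : algC) (a : word) {struct a} : word -> A :=
  match a with
  | [::] => fun b => mon (rev b)
  | la :: a' =>
    fix stuffle_rev_l (b : word) {struct b} : A :=
      match la with
      | None => stuffle_rev s a' b * X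
      | Some _ =>
        match b with
        | [::] => mon (relabel_word s (rev a))
        | None :: b' => stuffle_rev_l b' * X
        | Some t :: b' =>
            (stuffle_rev s a' b + stuffle_rev_l b' + stuffle_rev s a' b' * X) * Yg t
        end
      end
  end.

Definition stuffle_word (s : algC) (a b : word) : A := stuffle_rev s (rev a) (rev b).

Fact stuffle_key : unit. Proof. exact: tt. Qed.
Definition stuffle := locked_with stuffle_key
  (fun (s : algC) (p q : A) => lin (fun a => lin (stuffle_word s a) q) p).

Lemma stuffleE (s : algC) (p q : A) : stuffle s p q = lin (fun a => lin (stuffle_word s a) q) p.
Proof. by rewrite /stuffle locked_withE. Qed.

Lemma relabel_word_rcons (s : algC) (a : word) (l : letter) :
  relabel_word s (rcons a l) = rcons (relabel_word s a) (omap (fun=> s) l).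
Proof. exact: map_rcons. Qed.

Lemma relabel_wordK (r s : algC) (a : word) :
  relabel_word s (relabel_word r a) = relabel_word s a.
Proof. by rewrite /relabel_word -map_comp; apply: eq_map => -[]. Qed.

Lemma stuffle_word_nill (s : algC) (b : word) : stuffle_word s [::] b = mon b.
Proof. by rewrite /stuffle_word /= revK. Qed.

Lemma stuffle_wordXl (s : algC) (a b : word) :
  stuffle_word s (rcons a None) b = rmul None (stuffle_word s a b).
Proof. by rewrite /stuffle_word rev_rcons rmulE; case: (rev b). Qed.

Lemma stuffle_word_nilr (s : algC) (a : word) :
  stuffle_word s a [::] = mon (relabel_word s a).
Proof.
elim/last_ind: a => [|a [c|] IH]; first by rewrite stuffle_word_nill.
  by rewrite /stuffle_word rev_rcons /= rev_cons revK.
by rewrite stuffle_wordXl IH relabel_word_rcons mon_rcons.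
Qed.

Lemma stuffle_wordYX (s c : algC) (a b : word) :
  stuffle_word s (rcons a (Some c)) (rcons b None) =
  rmul None (stuffle_word s (rcons a (Some c)) b).
Proof. by rewrite /stuffle_word !rev_rcons rmulE. Qed.

Lemma stuffle_wordYY (s c t : algC) (a b : word) :
  stuffle_word s (rcons a (Some c)) (rcons b (Some t)) =
  rmul (Some t) (stuffle_word s a (rcons b (Some t)) + stuffle_word s (rcons a (Some c)) b
                 + rmul None (stuffle_word s a b)).
Proof. by rewrite /stuffle_word !rev_rcons !rmulE. Qed.

Lemma stuffle_wordXr (s : algC) (a b : word) :
  stuffle_word s a (rcons b None) = rmul None (stuffle_word s a b).
Proof.
elim/last_ind: a => [|a [c|] IH]; last by rewrite !stuffle_wordXl IH.
  by rewrite !stuffle_word_nill mon_rcons.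
exact: stuffle_wordYX.
Qed.

Lemma relabel_mon (s : algC) (w : word) : relabel s (mon w) = mon (relabel_word s w).
Proof. exact: lin_mon. Qed.

Lemma relabel_rmul (s : algC) (l : letter) (p : A) :
  relabel s (rmul l p) = rmul (omap (fun=> s) l) (relabel s p).
Proof.
by rewrite /relabel lin_rmul lin_rmulr; apply: eq_lin => w; rewrite relabel_word_rcons mon_rcons.
Qed.

Lemma stuffle_word_relabel (r s : algC) (a c : word) :
  stuffle_word s (relabel_word r a) c = stuffle_word s a c.
Proof.
elim/last_ind: a c => [//|a l IH] c; rewrite relabel_word_rcons.
case: l => [x|]; last by rewrite !stuffle_wordXl IH.
elim/last_ind: c => [|c [t|] IHc].
- by rewrite !stuffle_word_nilr relabel_word_rcons relabel_wordK relabel_word_rcons.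
- by rewrite !stuffle_wordYY IHc !IH.
- by rewrite !stuffle_wordYX IHc.
Qed.

Lemma relabel_stuffle_word (r s : algC) (a b : word) :
  relabel s (stuffle_word r a b) = stuffle_word s a (relabel_word s b).
Proof.
elim/last_ind: a b => [|a l IH] b; first by rewrite !stuffle_word_nill relabel_mon.
case: l => [x|]; last by rewrite !stuffle_wordXl relabel_rmul IH.
elim/last_ind: b => [|b [t|] IHb].
- by rewrite !stuffle_word_nilr relabel_mon relabel_wordK.
- rewrite stuffle_wordYY relabel_rmul !raddfD /= relabel_rmul !IH IHb.
  by rewrite relabel_word_rcons stuffle_wordYY.
- by rewrite relabel_word_rcons !stuffle_wordYX relabel_rmul IHb.
Qed.

Section StuffleLinear.
Variable s : algC.

Lemma stuffleDl (p p' q : A) : stuffle s (p + p') q = stuffle s p q + stuffle s p' q.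
Proof. by rewrite !stuffleE raddfD. Qed.

Lemma stuffleNl (p q : A) : stuffle s (- p) q = - stuffle s p q.
Proof. by rewrite !stuffleE raddfN. Qed.

Lemma stuffleZl (k : rat) (p q : A) : stuffle s (k *: p) q = k *: stuffle s p q.
Proof. by rewrite !stuffleE linearZ. Qed.

Lemma stuffleDr (p q q' : A) : stuffle s p (q + q') = stuffle s p q + stuffle s p q'.
Proof. by rewrite !stuffleE -lin_funD; apply: eq_lin => a; rewrite raddfD. Qed.

Lemma stuffleNr (p q : A) : stuffle s p (- q) = - stuffle s p q.
Proof. by rewrite !stuffleE -lin_funN; apply: eq_lin => a; rewrite raddfN. Qed.

Lemma stuffleZr (k : rat) (p q : A) : stuffle s p (k *: q) = k *: stuffle s p q.
Proof. by rewrite !stuffleE -lin_funZ; apply: eq_lin => a; rewrite linearZ. Qed.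

End StuffleLinear.

Lemma stuffle_mon (s : algC) (a b : word) : stuffle s (mon a) (mon b) = stuffle_word s a b.
Proof. by rewrite stuffleE !lin_mon. Qed.

Lemma stuffle1l (s : algC) (q : A) : stuffle s 1 q = q.
Proof.
rewrite stuffleE -mon_nil lin_mon -[RHS]lin_monE.
by apply: eq_lin => b; exact: stuffle_word_nill.
Qed.

Lemma stuffle1r (s : algC) (p : A) : stuffle s p 1 = relabel s p.
Proof. by rewrite stuffleE; apply: eq_lin => a; rewrite -mon_nil lin_mon stuffle_word_nilr. Qed.

Lemma stuffle_rmulXl (s : algC) (p q : A) :
  stuffle s (rmul None p) q = rmul None (stuffle s p q).
Proof.
rewrite !stuffleE lin_rmul lin_rmulr; apply: eq_lin => a.
by rewrite lin_rmulr; apply: eq_lin => b; rewrite stuffle_wordXl.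
Qed.

Lemma stuffle_rmulXr (s : algC) (p q : A) :
  stuffle s p (rmul None q) = rmul None (stuffle s p q).
Proof.
rewrite !stuffleE lin_rmulr; apply: eq_lin => a.
by rewrite lin_rmul lin_rmulr; apply: eq_lin => b; rewrite stuffle_wordXr.
Qed.

Lemma stuffle_rmulYY (s c t : algC) (p q : A) :
  stuffle s (rmul (Some c) p) (rmul (Some t) q) =
  rmul (Some t) (stuffle s p (rmul (Some t) q) + stuffle s (rmul (Some c) p) q
                 + rmul None (stuffle s p q)).
Proof.
rewrite !stuffleE !lin_rmul lin_rmulr -!lin_funD lin_rmulr; apply: eq_lin => a /=.
rewrite !lin_rmul lin_rmulr -!lin_funD lin_rmulr; apply: eq_lin => b /=.
by rewrite stuffle_wordYY.
Qed.

(** * Associativity of the stuffle product *)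

(* [zmod_cancel] proves an identity between signed sums of atoms in a
   Z-module: the head summand is marked by [pivot] and moved right until it
   meets its opposite. *)
Fact pivot_key : unit. Proof. exact: tt. Qed.
Definition pivot {V : zmodType} : V -> V := locked_with pivot_key id.

Section Pivot.
Variable V : zmodType.
Implicit Types a y z : V.

Lemma pivotE a : pivot a = a. Proof. by rewrite /pivot locked_withE. Qed.
Lemma pivot_swap a y z : pivot a + (y + z) = y + (pivot a + z).
Proof. by rewrite pivotE addrCA. Qed.
Lemma pivot_addNK a z : pivot a + (- a + z) = z. Proof. by rewrite pivotE addNKr. Qed.
Lemma pivot_addKN a z : pivot (- a) + (a + z) = z. Proof. by rewrite pivotE addKr. Qed.
Lemma pivot_subrr a : pivot a - a = 0. Proof. by rewrite pivotE subrr. Qed.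
Lemma pivot_addNr a : pivot (- a) + a = 0. Proof. by rewrite pivotE addNr. Qed.

End Pivot.

Ltac cancel_head :=
  match goal with |- ?x + _ = 0 => rewrite -{1}[x]pivotE end;
  repeat first [ rewrite pivot_addNK | rewrite pivot_addKN | rewrite pivot_subrr
               | rewrite pivot_addNr | rewrite pivot_swap ];
  rewrite ?addr0; lazymatch goal with |- context [pivot _] => fail | _ => idtac end.

Ltac zmod_cancel :=
  apply/eqP; rewrite -subr_eq0 ?opprD ?opprK -?addrA; apply/eqP;
  repeat cancel_head; reflexivity.

Lemma stuffle_wmon (s : algC) (a b : word) : stuffle s (wmon a) (wmon b) = stuffle_word s a b.
Proof. by rewrite !wmonE stuffle_mon. Qed.

Lemma relabel_wmon (s : algC) (w : word) : relabel s (wmon w) = wmon (relabel_word s w).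
Proof. by rewrite !wmonE relabel_mon. Qed.

Lemma stuffle_wmonYY (s c t : algC) (a b : word) :
  stuffle s (wmon (rcons a (Some c))) (wmon (rcons b (Some t))) =
  rmul (Some t) (stuffle s (wmon a) (wmon (rcons b (Some t)))
                 + stuffle s (wmon (rcons a (Some c))) (wmon b)
                 + rmul None (stuffle s (wmon a) (wmon b))).
Proof. by rewrite !stuffle_wmon stuffle_wordYY. Qed.

Lemma stuffle_wmonYl (s c t : algC) (a : word) (q : A) :
  stuffle s (wmon (rcons a (Some c))) (rmul (Some t) q) =
  rmul (Some t) (stuffle s (wmon a) (rmul (Some t) q) + stuffle s (wmon (rcons a (Some c))) q
                 + rmul None (stuffle s (wmon a) q)).
Proof. by rewrite wmon_rcons stuffle_rmulYY. Qed.

Lemma stuffle_wmonYr (s c t : algC) (p : A) (b : word) :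
  stuffle s (rmul (Some c) p) (wmon (rcons b (Some t))) =
  rmul (Some t) (stuffle s p (wmon (rcons b (Some t))) + stuffle s (rmul (Some c) p) (wmon b)
                 + rmul None (stuffle s p (wmon b))).
Proof. by rewrite wmon_rcons stuffle_rmulYY. Qed.

Lemma stuffle_assoc_wmon (r s : algC) (a b c : word) :
  stuffle s (stuffle r (wmon a) (wmon b)) (wmon c) =
  stuffle s (wmon a) (stuffle s (wmon b) (wmon c)).
Proof.
move Hn : (size a + size b + size c)%N => n.
elim/ltn_ind: n a b c Hn => n IHn a b c Hn.
have IH a' b' c' : (size a' + size b' + size c' < n)%N ->
    stuffle s (stuffle r (wmon a') (wmon b')) (wmon c') =
    stuffle s (wmon a') (stuffle s (wmon b') (wmon c')).
  by move=> lt; exact: IHn _ lt a' b' c' erefl.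
case/lastP: a Hn => [|a la] Hn; first by rewrite wmon_nil !stuffle1l.
case/lastP: b Hn => [|b lb] Hn.
  by rewrite wmon_nil stuffle1r stuffle1l relabel_wmon !stuffle_wmon stuffle_word_relabel.
case/lastP: c Hn => [|c lc] Hn.
  by rewrite wmon_nil !stuffle1r stuffle_wmon relabel_stuffle_word relabel_wmon stuffle_wmon.
rewrite !size_rcons in Hn.
case: la Hn => [ca|] Hn; last first.
  by rewrite wmon_rcons !stuffle_rmulXl IH // !size_rcons; lia.
case: lb Hn => [cb|] Hn; last first.
  rewrite [wmon (rcons b _)]wmon_rcons stuffle_rmulXr !stuffle_rmulXl stuffle_rmulXr.
  by rewrite IH // !size_rcons; lia.
case: lc Hn => [t|] Hn; last first.
  by rewrite [wmon (rcons c _)]wmon_rcons !stuffle_rmulXr IH // !size_rcons; lia.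
rewrite [stuffle s (wmon (rcons b _)) _]stuffle_wmonYY stuffle_wmonYl -stuffle_wmonYY.
rewrite (stuffle_wmonYY r) stuffle_wmonYr -(stuffle_wmonYY r).
rewrite !(stuffleDl, stuffleDr, stuffle_rmulXl, stuffle_rmulXr) !IH ?size_rcons; try lia.
rewrite !rmulD; zmod_cancel.
Qed.

Lemma stuffle_assoc (r s : algC) (p q u : A) :
  stuffle s (stuffle r p q) u = stuffle s p (stuffle s q u).
Proof.
have assoc_c a b u' :
    stuffle s (stuffle r (mon a) (mon b)) u' = stuffle s (mon a) (stuffle s (mon b) u').
  move: u'; apply: eq_linear_mon => [k x y|k x y|c] /=.
  - by rewrite !(stuffleDr, stuffleZr).
  - by rewrite !(stuffleDr, stuffleZr).
  - by rewrite -!wmonE stuffle_assoc_wmon.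
have assoc_bc a q' u' :
    stuffle s (stuffle r (mon a) q') u' = stuffle s (mon a) (stuffle s q' u').
  move: q'; apply: eq_linear_mon => [k x y|k x y|b] /=; last exact: assoc_c.
  - by rewrite stuffleDr stuffleZr stuffleDl stuffleZl.
  - by rewrite stuffleDl stuffleZl stuffleDr stuffleZr.
move: p; apply: eq_linear_mon => [k x y|k x y|a] /=; last exact: assoc_bc.
- by rewrite !(stuffleDl, stuffleZl).
- by rewrite !(stuffleDl, stuffleZl).
Qed.

(** * Conjugating the diamond product *)

Lemma splitlast_rcons (v : word) (l : letter) : splitlast (rcons v l) = Some (v, l).
Proof. by rewrite /splitlast rev_rcons revK. Qed.

Lemma dia_word_nill (s : algC) (w : word) : dia_word s [::] w = mon w.
Proof. by case: w. Qed.

Lemma dia_word_nilr (s : algC) (v : word) (l : letter) :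
  dia_word s (rcons v l) [::] = psi s (phi (mon (rcons v l))).
Proof. by rewrite /dia_word addn0 size_rcons /= splitlast_rcons. Qed.

Section DiamondRecursion.
Variables (s : algC) (v w : word).
Local Notation D := (dia_word s).

Lemma dia_wordXX : D (rcons v None) (rcons w None) =
  rmul None (D v (rcons w None)) - rmul None (D (rcons v (Some 1)) w).
Proof. by rewrite /dia_word !size_rcons !addSn !addnS /= !splitlast_rcons !rmulE. Qed.

Lemma dia_wordXY1 : D (rcons v None) (rcons w (Some 1)) =
  rmul None (D v (rcons w (Some 1))) + rmul (Some 1) (D (rcons v None) w).
Proof. by rewrite /dia_word !size_rcons !addSn !addnS /= !splitlast_rcons eqxx !rmulE. Qed.

Lemma dia_wordXY (t : algC) : t != 1 -> D (rcons v None) (rcons w (Some t)) =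
  rmul None (D v (rcons w (Some t)))
  + rmul (Some t) (D v (rcons w None) + D v (rcons w (Some t)))
  - rmul (Some t) (D (rcons v (Some 1)) w).
Proof.
move=> /negbTE t1.
by rewrite /dia_word !size_rcons !addSn !addnS /= !splitlast_rcons t1 !rmulE.
Qed.

Lemma dia_wordYX : D (rcons v (Some 1)) (rcons w None) =
  rmul (Some 1) (D v (rcons w None)) + rmul None (D (rcons v (Some 1)) w).
Proof. by rewrite /dia_word !size_rcons !addSn !addnS /= !splitlast_rcons eqxx !rmulE. Qed.

Lemma dia_wordYY1 : D (rcons v (Some 1)) (rcons w (Some 1)) =
  rmul (Some 1) (D v (rcons w (Some 1))) - rmul (Some 1) (D (rcons v None) w).
Proof. by rewrite /dia_word !size_rcons !addSn !addnS /= !splitlast_rcons eqxx !rmulE. Qed.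

Lemma dia_wordYY (t : algC) : t != 1 -> D (rcons v (Some 1)) (rcons w (Some t)) =
  rmul (Some 1) (D v (rcons w (Some t)))
  - rmul (Some t) (D v (rcons w None) + D v (rcons w (Some t)))
  + rmul (Some t) (D (rcons v (Some 1)) w).
Proof.
move=> /negbTE t1.
by rewrite /dia_word !size_rcons !addSn !addnS /= !splitlast_rcons eqxx t1 !rmulE.
Qed.

End DiamondRecursion.

Lemma mu1E (t : algC) : mu 1 t = (t == 1).
Proof. by rewrite /mu expr1. Qed.

Lemma Iw_relabel (acc : algC) (w : word) :
  all (letter_mu 1) w -> Iw acc w = relabel_word acc w.
Proof.
elim: w acc => [|[t|] w IHw] acc //=; last by move=> ok; rewrite IHw.
by rewrite mu1E => /andP[/eqP -> ok]; rewrite mulr1 IHw.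
Qed.

Lemma IwMw_relabel (s : algC) (w : word) :
  all (letter_mu 1) w -> Iw 1 (Mw s w) = relabel_word s w.
Proof.
elim: w => [|[t|] w IHw] //=; last by move=> ok; rewrite IHw.
by rewrite mu1E => /andP[/eqP -> ok]; rewrite mulr1 mul1r Iw_relabel.
Qed.

Lemma phi_psi (s : algC) (p : A) : p \in alg_mu 1 -> phi (psi s p) = relabel s p.
Proof.
move=> p1; rewrite /psi phiK /Imap /Mmap linear_lin; last exact: lin_is_linear.
by apply: eq_lin_mu p1 _ => w ok /=; rewrite lin_mon IwMw_relabel.
Qed.

Lemma rmul_alg_mu (r : nat) (l : letter) (p : A) :
  letter_mu r l -> p \in alg_mu r -> rmul l p \in alg_mu r.
Proof. by move=> lr pr; rewrite rmulE rpredM // mon_alg_mu //= andbT. Qed.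

Lemma relabel_word_mu (r : nat) (s : algC) (w : word) :
  mu r s -> all (letter_mu r) (relabel_word s w).
Proof. by move=> sr; rewrite all_map; apply/allP => -[]. Qed.

Lemma stuffle_word_alg_mu (r : nat) (s : algC) (a b : word) :
  mu r s -> all (letter_mu r) b -> stuffle_word s a b \in alg_mu r.
Proof.
move=> sr; elim/last_ind: a b => [|a l IH] b br.
  by rewrite stuffle_word_nill mon_alg_mu.
case: l => [c|]; last by rewrite stuffle_wordXl rmul_alg_mu // IH.
elim/last_ind: b br => [|b l' IHb].
  by rewrite stuffle_word_nilr mon_alg_mu ?relabel_word_mu.
rewrite all_rcons => /andP[lr br]; case: l' lr => [t|] lr; last first.
  by rewrite stuffle_wordYX rmul_alg_mu ?IHb.
rewrite stuffle_wordYY rmul_alg_mu ?rpredD ?rmul_alg_mu ?IHb ?IH //.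
by rewrite all_rcons lr.
Qed.

Lemma stuffle_alg_mu (r : nat) (s : algC) (p q : A) :
  mu r s -> q \in alg_mu r -> stuffle s p q \in alg_mu r.
Proof.
move=> sr qr; rewrite stuffleE; apply: lin_alg_mu => m _.
by apply: lin_alg_mu => m' /(alg_muP _ _ qr); apply: stuffle_word_alg_mu.
Qed.

Ltac expand_stuffle :=
  rewrite !(stuffleDl, stuffleDr, stuffleNl, stuffleNr,
            stuffle_rmulXl, stuffle_rmulXr, stuffle_rmulYY) ?(rmulD, rmulN).

Lemma dia_word_conj (s : algC) (v w : word) : all (letter_mu 1) v ->
  phi (dia_word s v w) = stuffle s (phi (wmon v)) (phi (wmon w)).
Proof.
move Hn : (size v + size w)%N => n.
elim/ltn_ind: n v w Hn => n IHn v w Hn.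
have IH v' w' : (size v' + size w' < n)%N -> all (letter_mu 1) v' ->
    phi (dia_word s v' w') = stuffle s (phi (wmon v')) (phi (wmon w')).
  by move=> lt; exact: IHn _ lt v' w' erefl.
case/lastP: v Hn => [|v a] Hn.
  by rewrite dia_word_nill wmon_nil rmorph1 stuffle1l wmonE.
case/lastP: w Hn => [|w b] Hn va1.
  rewrite dia_word_nilr wmon_nil rmorph1 stuffle1r wmonE phi_psi //.
  by rewrite phi_alg_mu // mon_alg_mu.
move: va1; rewrite all_rcons => /andP[a1 v1].
have vX1 : all (letter_mu 1) (rcons v None) by rewrite all_rcons.
have vY1 : all (letter_mu 1) (rcons v (Some 1)) by rewrite all_rcons /= mu_r1.
rewrite !size_rcons in Hn.
case: a a1 => [a|] a1.
- move: a1; rewrite /= mu1E => /eqP ->.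
  case: b Hn => [t|] Hn; last first.
    rewrite dia_wordYX rmorphD /= phi_rmulY1 phi_rmulX !IH ?size_rcons //; try lia.
    rewrite !wmon_rcons ?phi_rmulX ?phi_rmulY1; expand_stuffle; zmod_cancel.
  have [-> | nt] := eqVneq t 1.
    rewrite dia_wordYY1 rmorphB /= !phi_rmulY1 !IH ?size_rcons //; try lia.
    rewrite !wmon_rcons ?phi_rmulX ?phi_rmulY1; expand_stuffle; zmod_cancel.
  rewrite dia_wordYY // rmorphD rmorphB /= phi_rmulY1 !(phi_rmulY _ nt) rmorphD /=.
  rewrite !IH ?size_rcons //; try lia.
  rewrite !wmon_rcons ?phi_rmulX ?phi_rmulY1 ?(phi_rmulY _ nt); expand_stuffle; zmod_cancel.
- case: b Hn => [t|] Hn; last first.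
    rewrite dia_wordXX rmorphB /= !phi_rmulX !IH ?size_rcons //; try lia.
    rewrite !wmon_rcons ?phi_rmulX ?phi_rmulY1; expand_stuffle; zmod_cancel.
  have [-> | nt] := eqVneq t 1.
    rewrite dia_wordXY1 rmorphD /= phi_rmulX phi_rmulY1 !IH ?size_rcons //; try lia.
    rewrite !wmon_rcons ?phi_rmulX ?phi_rmulY1; expand_stuffle; zmod_cancel.
  rewrite dia_wordXY // rmorphB rmorphD /= phi_rmulX !(phi_rmulY _ nt) rmorphD /=.
  rewrite !IH ?size_rcons //; try lia.
  rewrite !wmon_rcons ?phi_rmulX ?phi_rmulY1 ?(phi_rmulY _ nt); expand_stuffle; zmod_cancel.
Qed.

Lemma dia_conj (s : algC) (p q : A) :
  p \in alg_mu 1 -> dia s p q = phi (stuffle s (phi p) (phi q)).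
Proof.
move=> p1; transitivity (lin (fun v => phi (stuffle s (phi (mon v)) (phi q))) p).
  apply: eq_lin_mu p1 _ => v v1; apply: (can_inj phiK).
  rewrite [RHS]phiK (@linear_lin phi); last exact: linearP.
  rewrite (@linear_monE (fun x => stuffle s (phi (mon v)) (phi x)) q); last first.
    by move=> k x y; rewrite linearP stuffleDr stuffleZr.
  by apply: eq_lin => w /=; rewrite (dia_word_conj _ _ v1) !wmonE.
rewrite (@linear_monE (fun x => phi (stuffle s (phi x) (phi q))) p) //.
by move=> k x y; rewrite linearP stuffleDl stuffleZl linearP.
Qed.

Theorem mainTheorem10 (r : nat) (hr : (0 < r)%N) (s : algC) (hs : mu r s)
  (u v w : A) (hu : inA 1 u) (hv : inA 1 v) (hw : inA r w) :
  dia s (dia 1 u v) w = dia s u (dia s v w).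
Proof.
have [u1 v1] : u \in alg_mu 1 /\ v \in alg_mu 1 by split; apply/alg_muP.
have uv1 : dia 1 u v \in alg_mu 1.
  by rewrite dia_conj // phi_alg_mu // stuffle_alg_mu ?mu_r1 // phi_alg_mu.
transitivity (phi (stuffle s (phi (dia 1 u v)) (phi w))); first exact: dia_conj.
transitivity (phi (stuffle s (stuffle 1 (phi u) (phi v)) (phi w))).
  by rewrite (dia_conj 1 v u1) phiK.
transitivity (phi (stuffle s (phi u) (stuffle s (phi v) (phi w)))).
  by rewrite stuffle_assoc.
by rewrite [RHS](dia_conj s _ u1) (dia_conj s w v1) phiK.
Qed.
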